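(* Let $\mathcal{G}$ be a Kripke structure (viewed as a one-agent concurrent game structure) and let $\forall\pi_1.\cdots\forall\pi_n.\mathbf{E}.\varphi$ be an $\texttt{AHLTL}$ formula, with $\varphi$ quantifier-free over path variables $\pi_1,\dots,\pi_n$. Consider the statements (1) $\mathcal{G}_{\mathit{stut}}\models[\langle\langle\{\mathit{sched}\}\rangle\rangle\pi_1.\cdots\langle\langle\{\mathit{sched}\}\rangle\rangle\pi_n.]\,\big(\varphi\wedge\bigwedge_{i=1}^n\mathit{fair}_{\pi_i}\big)$, where $\mathit{fair}_{\pi_i}:=\square\lozenge\neg\mathit{stut}_{\pi_i}$; (2) $\mathcal{G}\models_{\texttt{AHLTL}}\forall\pi_1.\cdots\forall\pi_n.\mathbf{E}.\varphi$. Then (1) implies (2). If moreover $\varphi$ is an admissible formula, then (1) and (2) are equivalent.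
   Context: A multi-stage concurrent game structure (MSCGS) is a tuple $\mathcal{G}=(S,s_0,\Xi,\mathscr{M},\delta,d,\mathbf{AP},\ell)$ with finite state set $S$, initial state $s_0$, finite agent set $\Xi$, finite move set $\mathscr{M}$, transition function $\delta:S\times(\Xi\to\mathscr{M})\to S$, stage function $d:\Xi\to\mathbb{N}$, atomic propositions $\mathbf{AP}$, labelling $\ell:S\to2^{\mathbf{AP}}$. A Kripke structure $(S,s_0,\to,\mathbf{AP},\ell)$ is viewed as the MSCGS with a single agent (stage $0$) whose moves choose the $\to$-successor; its paths are the sequences $s_0s_1\cdots$ with $s_i\to s_{i+1}$. Stutter version: for an MSCGS $\mathcal{G}$ and a fresh agent $\mathit{sched}\notin\Xi$, $\mathcal{G}_{\mathit{stut}}=(S\times\{0,1\},(s_0,0),\Xi\uplus\{\mathit{sched}\},\mathscr{M}\times\{0,1\},\delta',d',\mathbf{AP}\uplus\{\mathit{stut}\},\ell')$ where $\delta'((s,b),\sigma)=(\delta(s,\mathit{proj}_1\circ\sigma_{\mid\Xi}),0)$ if $(\mathit{proj}_2\circ\sigma)(\mathit{sched})=0$ and $\delta'((s,b),\sigma)=(s,1)$ if $(\mathit{proj}_2\circ\sigma)(\mathit{sched})=1$; $\ell'((s,0))=\ell(s)$, $\ell'((s,1))=\ell(s)\cup\{\mathit{stut}\}$; $d'(\xi)=d(\xi)$ for $\xi\in\Xi$ and $d'(\mathit{sched})=m+1$ with $m$ the maximal value of $d$. $\texttt{HyperATL}^*$ semantics of a quantifier block on an MSCGS, evaluated from the empty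 assignment: a strategy for agent $\xi$ in copy $j$ maps a finite history in $(S^n)^+$ (states of all $n$ copies) together with the moves already fixed for all agents of stage $<d(\xi)$ in all $n$ copies to a move. An outcome is $u\in(S^n)^\omega$ with $u(0)=(s_0,\dots,s_0)$ such that for every $i$ there are global move vectors $\sigma_1,\dots,\sigma_n$ with $u(i+1)_j=\delta(u(i)_j,\sigma_j)$ and $\sigma_j(\xi)$ given by the strategy of $\xi$ in copy $j$ for every controlled agent $\xi$. The block $[\langle\langle A_1\rangle\rangle\pi_1.\cdots\langle\langle A_n\rangle\rangle\pi_n.]\psi$ holds iff there exist strategies for all controlled agents such that every outcome $(t_1,\dots,t_n)$ satisfies $\psi$ under $\pi_j\mapsto t_j$, where quantifier-free $\psi$ is evaluated as synchronous LTL with $a_{\pi}$ meaning $a$ holds in the current state of the path bound to $\pi$. $\texttt{AHLTL}$ semantics: $\mathcal{G}\models_{\texttt{AHLTL}}\forall\pi_1.\cdots\forall\pi_n.\mathbf{E}.\varphi$ iff for all paths $t_1,\dots,t_n$ of $\mathcal{G}$ there is a fair trajectory such that the stuttered paths satisfy $\varphi$. A trajectory is a sequence $\tau\in(2^{\{\pi_1,\dots,\pi_n\}})^\omega$ (the set of paths that progress at each step); it is fair if every $\pi_i$ belongs to $\tau(m)$ for infinitely many $m$. With $p_i(m)=|\{m'<m\mid\pi_i\in\tau(m')\}|$, the stuttered path for $\pi_i$ is $t_i(p_i(0))t_i(p_i(1))\cdots$, and $\varphi$ is evaluated synchronously (as LTL over indexed propositions) on the stuttered paths. An admissible formula is a conjunction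 of formulas of the form $\square\bigwedge_{a\in P}(a_{\pi_i}\leftrightarrow a_{\pi_j})$ ($P$ a set of atomic propositions) and of stutter-invariant LTL formulas over a single path variable (formulas whose truth value is unchanged when passing to a stutter-equivalent trace). *)

From mathcomp Require Import all_boot.
Set Implicit Arguments. Unset Strict Implicit. Unset Printing Implicit Defensive.

Inductive hform (AP : Type) (n : nat) : Type :=
| HTrue
| HAtom of AP & 'I_n
| HNot of hform AP n
| HAnd of hform AP n & hform AP n
| HNext of hform AP n
| HUntil of hform AP n & hform AP n.
Arguments HTrue {AP n}.

Definition HOr AP n (f g : hform AP n) := HNot (HAnd (HNot f) (HNot g)).
Definition HIff AP n (f g : hform AP n) := HOr (HAnd f g) (HAnd (HNot f) (HNot g)).
Definition HEv AP n (f : hform AP n) := HUntil HTrue f.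
Definition HGlob AP n (f : hform AP n) := HNot (HEv (HNot f)).
Definition hbigand AP n (s : seq (hform AP n)) := foldr (@HAnd AP n) HTrue s.

(* synchronous evaluation; w i k = label of the k-th state of the path bound to pi_i *)
Fixpoint hsat AP n (w : 'I_n -> nat -> AP -> bool) (k : nat) (f : hform AP n) : Prop :=
  match f with
  | HTrue => True
  | HAtom a i => w i k a = true
  | HNot g => ~ hsat w k g
  | HAnd g h => hsat w k g /\ hsat w k h
  | HNext g => hsat w k.+1 g
  | HUntil g h => exists m, k <= m /\ hsat w m h /\ (forall j, k <= j < m -> hsat w j g)
  end.

Fixpoint hmap AP AP' n (g : AP -> AP') (f : hform AP n) : hform AP' n :=
  match f with
  | HTrue => HTrue
  | HAtom a i => HAtom (g a) i
  | HNot f1 => HNot (hmap g f1)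
  | HAnd f1 f2 => HAnd (hmap g f1) (hmap g f2)
  | HNext f1 => HNext (hmap g f1)
  | HUntil f1 f2 => HUntil (hmap g f1) (hmap g f2)
  end.

Fixpoint only_var AP n (i : 'I_n) (f : hform AP n) : bool :=
  match f with
  | HTrue => true
  | HAtom _ j => j == i
  | HNot f1 | HNext f1 => only_var i f1
  | HAnd f1 f2 | HUntil f1 f2 => only_var i f1 && only_var i f2
  end.

Definition stutter_equiv AP (w w' : nat -> AP -> bool) : Prop :=
  exists f g : nat -> nat,
    f 0 = 0 /\ g 0 = 0 /\ (forall k, f k < f k.+1) /\ (forall k, g k < g k.+1) /\
    forall k x y, f k <= x < f k.+1 -> g k <= y < g k.+1 -> w x =1 w' y.

Definition stutter_invariant AP n (i : 'I_n) (f : hform AP n) : Prop :=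
  forall w w' : 'I_n -> nat -> AP -> bool,
    stutter_equiv (w i) (w' i) -> (hsat w 0 f <-> hsat w' 0 f).

Inductive admissible AP n : hform AP n -> Prop :=
| adm_eq (i j : 'I_n) (P : seq AP) :
    admissible (HGlob (hbigand [seq HIff (HAtom a i) (HAtom a j) | a <- P]))
| adm_si (i : 'I_n) (f : hform AP n) :
    only_var i f -> stutter_invariant i f -> admissible f
| adm_and (f g : hform AP n) : admissible f -> admissible g -> admissible (HAnd f g).

Record mscgs := MSCGS {
  St : finType;
  s_init : St;
  Ag : finType;
  Mv : finType;
  delta : St -> (Ag -> Mv) -> St;
  stage : Ag -> nat;
  APt : Type;
  lab : St -> APt -> bool }.

(* A strategy for agent xi (in some copy): finite history (S^n)^+ and the
   move vectors of all copies; it must only depend on the moves of agents of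
   stage < stage xi. *)
Definition strat_fun (G : mscgs) (n : nat) :=
  seq ('I_n -> St G) -> ('I_n -> Ag G -> Mv G) -> Mv G.

Definition stage_respecting (G : mscgs) (n : nat) (xi : Ag G) (f : strat_fun G n) :=
  forall h (s s' : 'I_n -> Ag G -> Mv G),
    (forall j xi', @stage G xi' < @stage G xi -> s j xi' = s' j xi') -> f h s = f h s'.

Definition history (G : mscgs) n (u : nat -> 'I_n -> St G) (i : nat) :=
  [seq u k | k <- iota 0 i.+1].

Definition is_outcome (G : mscgs) n (A : 'I_n -> pred (Ag G))
    (str : 'I_n -> Ag G -> strat_fun G n) (u : nat -> 'I_n -> St G) : Prop :=
  (forall j, u 0 j = s_init G) /\
  forall i, exists s : 'I_n -> Ag G -> Mv G,
    (forall j, u i.+1 j = delta (u i j) (s j)) /\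
    (forall j xi, A j xi -> s j xi = str j xi (history u i) s).

(* G |= [<<A_1>>pi_1 ... <<A_n>>pi_n.] psi  (from the empty assignment) *)
Definition hyperatl_block (G : mscgs) n (A : 'I_n -> pred (Ag G)) (psi : hform (APt G) n) : Prop :=
  exists str : 'I_n -> Ag G -> strat_fun G n,
    (forall j xi, stage_respecting xi (str j xi)) /\
    forall u, is_outcome A str u -> hsat (fun j k => lab (u k j)) 0 psi.

(* stutter version; None is the fresh agent sched / the fresh proposition stut;
   the bit false = 0, true = 1 *)
Definition stut (G : mscgs) : mscgs :=
  {| St := (St G * bool)%type;
     s_init := (s_init G, false);
     Ag := option (Ag G);
     Mv := (Mv G * bool)%type;
     delta := fun sb s =>
       if (s None).2 then (sb.1, true)
       else (delta sb.1 (fun xi => (s (Some xi)).1), false);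
     stage := fun xi => if xi is Some x then stage x
                        else (\max_(x : Ag G) stage x).+1;
     APt := option (APt G);
     lab := fun sb a => if a is Some a' then lab sb.1 a' else sb.2 |}.

Record kripke := Kripke {
  KSt : finType;
  k_init : KSt;
  krel : rel KSt;
  KAP : Type;
  klab : KSt -> KAP -> bool }.

Definition serial (K : kripke) := forall s, exists t, @krel K s t.

Definition kripke_game (K : kripke) : mscgs :=
  {| St := KSt K; s_init := k_init K; Ag := unit; Mv := KSt K;
     delta := fun s m => if @krel K s (m tt) then m tt else odflt s [pick t | @krel K s t];
     stage := fun _ => 0; APt := KAP K; lab := @klab K |}.

Definition kpath (K : kripke) (t : nat -> KSt K) :=
  t 0 = k_init K /\ forall k, @krel K (t k) (t k.+1).

(* trajectories: tau m i = pi_i progresses at step m *)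
Definition fair_traj n (tau : nat -> 'I_n -> bool) :=
  forall i N, exists m, N <= m /\ tau m i.

Definition progress n (tau : nat -> 'I_n -> bool) (i : 'I_n) (m : nat) :=
  count (fun m' => tau m' i) (iota 0 m).

Definition ahltl_sat (K : kripke) n (phi : hform (KAP K) n) : Prop :=
  forall t : 'I_n -> nat -> KSt K, (forall i, kpath (t i)) ->
    exists tau, fair_traj tau /\
      hsat (fun i m => @klab K (t i (progress tau i m))) 0 phi.

Definition fairf AP n : hform (option AP) n :=
  hbigand [seq HGlob (HEv (HNot (HAtom None i))) | i <- enum 'I_n].

From Stdlib Require Import Classical ClassicalEpsilon FunctionalExtensionality.
From mathcomp Require Import all_boot zify.
Set Implicit Arguments. Unset Strict Implicit. Unset Printing Implicit Defensive.

(* (1) => (2): let the Kripke agent of copy i follow the given path t_i and the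
   scheduler play its winning strategy; the steps at which copy i does not
   stutter form a trajectory, fair by fair_pi, along which the stuttered paths
   satisfy phi.

   (2) => (1) for admissible phi, i.e. phi = (label equalities E) /\ (a
   stutter-closed property P): the scheduler plays greedily, letting a copy
   progress iff it belongs to some set of copies whose joint move preserves E.
   Such sets are closed under union, so the play satisfies E at every step.
   If some copies were stuck forever from a time T on, continue them by the
   refused move and the other copies by their own runs; AHLTL aligns these
   paths under E, and, moving one lagging copy at a time, the alignment can be
   shifted to start at the positions reached at T. The first stuck copy to move
   in it then exhibits a step that the greedy scheduler would have taken.
   Hence the play is fair, its destuttered runs are paths of the Kripke
   structure, and P transfers to the play by stutter closure. *)

Section Semantics.
Variables (AP : Type) (n : nat).
Implicit Types (w : 'I_n -> nat -> AP -> bool) (f g : hform AP n).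

Lemma hsat_ext f w w' :
  (forall i m a, w i m a = w' i m a) -> forall k, hsat w k f <-> hsat w' k f.
Proof.
move=> ww'; elim: f => [|a i|f IH|f IHf g IHg|f IH|f IHf g IHg] k /=.
- by [].
- by rewrite ww'.
- by rewrite IH.
- by rewrite IHf IHg.
- by rewrite IH.
- split=> -[m [km [hg hf]]]; exists m;
    split=> //; split=> [|j /hf]; by [apply/IHg | move/IHf].
Qed.

Lemma hsat_HEv w f k : hsat w k (HEv f) <-> exists2 m, k <= m & hsat w m f.
Proof. by split=> [[m [km [h _]]]|[m km h]]; exists m. Qed.

Lemma hsat_HGlob w f k : hsat w k (HGlob f) <-> forall m, k <= m -> hsat w m f.
Proof.
change (~ hsat w k (HEv (HNot f)) <-> forall m, k <= m -> hsat w m f).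
rewrite hsat_HEv; split=> [H m km|H [m km /= []]]; last exact: H.
by apply: NNPP => hf; apply: H; exists m.
Qed.

Lemma hsat_hbigand w (s : seq (hform AP n)) k :
  hsat w k (hbigand s) <-> forall f, List.In f s -> hsat w k f.
Proof.
elim: s => [|f s IH] /=; first by [].
rewrite IH; split=> [[hf hs] g [<-|/hs]//|H].
by split=> [|g hg]; apply: H; [left|right].
Qed.

Lemma hsat_HIff w f g k : hsat w k (HIff f g) <-> (hsat w k f <-> hsat w k g).
Proof. by rewrite /HIff /HOr /=; tauto. Qed.

Lemma hsat_glob_eq w (i j : 'I_n) (P : seq AP) :
  hsat w 0 (HGlob (hbigand [seq HIff (HAtom a i) (HAtom a j) | a <- P]))
  <-> forall m a, List.In a P -> w i m a = w j m a.
Proof.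
rewrite hsat_HGlob; split=> [H m a aP|H m _].
  move: (H m isT); rewrite hsat_hbigand => /(_ _ (List.in_map _ _ _ aP)).
  by rewrite hsat_HIff /=; case: (w i m a); case: (w j m a); intuition.
by rewrite hsat_hbigand => _ /List.in_map_iff [a [<- aP]]; rewrite hsat_HIff /= H.
Qed.

End Semantics.

Lemma hsat_hmap AP AP' n (g : AP -> AP') w (f : hform AP n) k :
  hsat w k (hmap g f) <-> hsat (fun i k a => w i k (g a)) k f.
Proof.
elim: f k => [|a i|f IH|f IHf h IHh|f IH|f IHf h IHh] k /=; rewrite ?IH ?IHf ?IHh //.
split=> -[m [km [hh hf]]]; exists m;
  split=> //; split=> [|j /hf]; by [apply/IHh | move/IHf].
Qed.

Lemma mem_In (T : eqType) (x : T) (s : seq T) : x \in s -> List.In x s.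
Proof. by elim: s => //= y s IH; rewrite in_cons => /orP [/eqP ->|/IH]; [left|right]. Qed.

Lemma hsat_fairf AP n (w : 'I_n -> nat -> option AP -> bool) :
  hsat w 0 (fairf AP n) <-> forall i N, exists m, N <= m /\ w i m None = false.
Proof.
rewrite /fairf hsat_hbigand; split=> [H i N|H _ /List.in_map_iff [i [<- _]]].
  have := H _ (List.in_map (fun i => HGlob (HEv (HNot (HAtom None i)))) _ _
                (mem_In (mem_enum _ i))).
  by rewrite hsat_HGlob => /(_ N isT); rewrite hsat_HEv => -[m Nm /negP/negbTE]; exists m.
rewrite hsat_HGlob => N _; rewrite hsat_HEv.
by have [m [Nm /= hm]] := H i N; exists m; rewrite //= hm.
Qed.

Section Admissible.
Variables (AP : Type) (n : nat).

Definition respects (E : 'I_n -> 'I_n -> AP -> Prop) (w : 'I_n -> nat -> AP -> bool) :=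
  forall i j a m, E i j a -> w i m a = w j m a.

Definition stutter_closed (P : ('I_n -> nat -> AP -> bool) -> Prop) :=
  forall w w', (forall i, stutter_equiv (w i) (w' i)) -> P w -> P w'.

Lemma admissible_decomp (phi : hform AP n) : admissible phi ->
  exists E (P : ('I_n -> nat -> AP -> bool) -> Prop),
    stutter_closed P /\ forall w, hsat w 0 phi <-> respects E w /\ P w.
Proof.
elim=> [i j s|i f _ si_f|f g _ [E1 [P1 [cl1 eq1]]] _ [E2 [P2 [cl2 eq2]]]].
- exists (fun i' j' a => [/\ i' = i, j' = j & List.In a s]), (fun _ => True).
  split=> // w; rewrite hsat_glob_eq /respects.
  by split=> [H|[H _] m a aP]; [split=> // _ _ a m [-> -> /H]|apply: H].
- exists (fun _ _ _ => False), (fun w => hsat w 0 f).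
  split=> [w w' ww'|w]; first exact: (si_f w w' (ww' i)).1.
  by split=> [hf|[]] //; split=> // ? ? ? ? [].
- exists (fun i j a => E1 i j a \/ E2 i j a), (fun w => P1 w /\ P2 w).
  split=> [w w' ww' [/(cl1 _ _ ww') ? /(cl2 _ _ ww') ?] //|w /=].
  rewrite eq1 eq2 /respects; split=> [[[e1 p1] [e2 p2]]|[e [p1 p2]]].
    by split=> // i j a m [/e1|/e2].
  by split; split=> // i j a m ?; apply: e; tauto.
Qed.

End Admissible.

Definition unit_step (s : nat -> nat) := forall x, s x <= s x.+1 <= (s x).+1.

Definition unbounded (s : nat -> nat) := forall N, exists x, N <= s x.

Section UnitStep.
Variables (s : nat -> nat) (s_step : unit_step s).

Lemma unit_step_homo : {homo s : x y / x <= y}.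
Proof. by apply: homo_leq => [//|y x z|x]; [exact: leq_trans|case/andP: (s_step x)]. Qed.

Lemma unit_step_ivt a b v : a <= b -> s a <= v <= s b -> exists2 x, a <= x <= b & s x = v.
Proof.
move=> /subnK <-; elim: (b - a) v => [|d IH] v /andP [av vb].
  by exists a; rewrite ?leqnn //; apply/eqP; rewrite eqn_leq vb av.
rewrite addSn in vb *; case: (ltnP (s (d + a)) v) => [lt_v|ge_v].
  by exists (d + a).+1; [lia | have := s_step (d + a); lia].
have [x /andP [ax xb] <-] := IH v ltac:(by rewrite av ge_v).
by exists x; rewrite ?ax //= ltnW.
Qed.

Hypotheses (s0 : s 0 = 0) (s_unb : unbounded s).

Lemma unit_step_onto v : exists x, s x = v.
Proof.
have [b vb] := s_unb v.
by have [x _ <-] := unit_step_ivt (leq0n b) (v := v) ltac:(by rewrite s0); exists x.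
Qed.

Lemma unit_step_blocks : exists F : nat -> nat,
  [/\ F 0 = 0, forall k, F k < F k.+1 & forall k x, F k <= x < F k.+1 -> s x = k].
Proof.
have hit k : exists x, s x == k by have [x /eqP] := unit_step_onto k; exists x.
exists (fun k => ex_minn (hit k)); split.
- by case: ex_minnP => m _ /(_ 0); rewrite s0 leqn0 => /(_ isT) /eqP.
- move=> k; case: ex_minnP => m1 /eqP s_m1 _; case: ex_minnP => m2 /eqP s_m2 _.
  by rewrite ltnNge; apply/negP => /unit_step_homo; rewrite s_m1 s_m2 ltnn.
- move=> k x; case: ex_minnP => m1 /eqP s_m1 _; case: ex_minnP => m2 _ min2 /andP [m1x xm2].
  have := unit_step_homo m1x; rewrite s_m1 leq_eqVlt => /orP [/eqP //|k_lt].
  have [y /andP [_ yx] /eqP /min2] := unit_step_ivt (leq0n x) (v := k.+1) ltac:(rewrite s0 /=; lia).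
  lia.
Qed.

End UnitStep.

Lemma stutter_equiv_reparam AP (w w1 w2 : nat -> AP -> bool) s1 s2 :
  unit_step s1 -> s1 0 = 0 -> unbounded s1 ->
  unit_step s2 -> s2 0 = 0 -> unbounded s2 ->
  (forall x, w1 x =1 w (s1 x)) -> (forall y, w2 y =1 w (s2 y)) ->
  stutter_equiv w1 w2.
Proof.
move=> st1 s10 unb1 st2 s20 unb2 w1E w2E.
have [F1 [F10 F1_lt F1_s]] := unit_step_blocks st1 s10 unb1.
have [F2 [F20 F2_lt F2_s]] := unit_step_blocks st2 s20 unb2.
exists F1, F2; do !split=> //; move=> k x y /F1_s s1x /F2_s s2y a.
by rewrite w1E w2E s1x s2y.
Qed.

Section Progress.
Variables (n : nat) (b : nat -> 'I_n -> bool) (k : 'I_n).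

Lemma progressS m : progress b k m.+1 = progress b k m + b m k.
Proof. by rewrite /progress -addn1 iotaD count_cat /= addn0. Qed.

Lemma progress_unit_step : unit_step (progress b k).
Proof. by move=> m; rewrite progressS; case: (b m k); rewrite ?addn0 ?addn1 leqnn ?leqnSn. Qed.

Lemma progress_unbounded : (forall N, exists m, N <= m /\ b m k) -> unbounded (progress b k).
Proof.
move=> rec; elim=> [|N [m hm]]; first by exists 0.
have [m' [mm' bm']] := rec m; exists m'.+1; rewrite progressS bm'.
by have := unit_step_homo progress_unit_step mm'; lia.
Qed.

End Progress.

Section StrategyPlay.
Variables (K : kripke) (n : nat).
Local Notation G := (stut (kripke_game K)).
Variables (str : 'I_n -> Ag G -> strat_fun G n) (t : 'I_n -> nat -> KSt K).

(* A configuration gives, for each copy, its position on the path [t j] and its stutter bit. *)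
Definition conf_state (c : 'I_n -> nat * bool) : 'I_n -> St G :=
  fun j => (t j (c j).1, (c j).2).

Definition path_moves (c : 'I_n -> nat * bool) : 'I_n -> Ag G -> Mv G :=
  fun j _ => (t j (c j).1.+1, false).

Definition conf0 : 'I_n -> nat * bool := fun _ => (0, false).

Definition stutters (h : seq ('I_n -> nat * bool)) (j : 'I_n) : bool :=
  (str j None (map conf_state h) (path_moves (last conf0 h))).2.

Definition next_conf (h : seq ('I_n -> nat * bool)) : 'I_n -> nat * bool :=
  fun j => ((last conf0 h j).1 + ~~ stutters h j, stutters h j).

Fixpoint confs (m : nat) : seq ('I_n -> nat * bool) :=
  if m is m'.+1 then rcons (confs m') (next_conf (confs m')) else [:: conf0].

Definition conf (m : nat) : 'I_n -> nat * bool := last conf0 (confs m).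

Definition sched_traj (m : nat) (j : 'I_n) : bool := ~~ stutters (confs m) j.

Lemma conf_succ m : conf m.+1 = next_conf (confs m).
Proof. by rewrite /conf /= last_rcons. Qed.

Lemma confs_iota m : confs m = map conf (iota 0 m.+1).
Proof.
elim: m => [|m IH] //.
by rewrite -(addn1 m.+1) iotaD map_cat -IH /= cats1 /conf /= last_rcons.
Qed.

Lemma progress_sched_traj j m : progress sched_traj j m = (conf m j).1.
Proof. by elim: m => [|m IH] //; rewrite progressS IH conf_succ. Qed.

Hypotheses (t_path : forall i, kpath (t i))
           (str_stage : forall j xi, stage_respecting xi (str j xi)).

Lemma conf_outcome :
  is_outcome (G := G) (fun _ xi => xi == None) str (fun m => conf_state (conf m)).
Proof.
split=> [j|m]; first by rewrite /conf_state /= (t_path j).1.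
have hist : history (fun m => conf_state (conf m)) m = map conf_state (confs m).
  by rewrite /history confs_iota -map_comp.
exists (fun j xi => if xi is Some _ then path_moves (conf m) j xi
                    else str j None (map conf_state (confs m)) (path_moves (conf m))).
split=> [j|j [xi|] //= _]; last first.
  by rewrite hist; apply: str_stage => j' [x|] //=; rewrite ltnn.
rewrite /= conf_succ /next_conf /conf_state /stutters -/(conf m) /=.
by case: (str j None _ _).2; rewrite /= ?addn0 ?addn1 ?(t_path j).2.
Qed.

End StrategyPlay.

Lemma ahltl_of_hyperatl_stut (K : kripke) (n : nat) (phi : hform (KAP K) n) :
  hyperatl_block (G := stut (kripke_game K)) (fun _ xi => xi == None)
      (HAnd (hmap Some phi) (fairf (KAP K) n)) -> ahltl_sat phi.
Proof.
move=> [str [str_stage sat]] t t_path.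
have [/hsat_hmap sat_phi /hsat_fairf sat_fair] := sat _ (conf_outcome t_path str_stage).
exists (sched_traj str t); split.
- move=> i N; have [[|m] [Nm /= stut_m]] := sat_fair i N.+1; first by [].
  by exists m; split; [lia | move: stut_m; rewrite conf_succ /sched_traj /= => ->].
- by apply: (iffLR (hsat_ext _ _ 0)) sat_phi => i m a; rewrite /= progress_sched_traj.
Qed.

Definition decide (P : Prop) : bool := if excluded_middle_informative P then true else false.

Lemma decideP (P : Prop) : reflect P (decide P).
Proof. by rewrite /decide; case: excluded_middle_informative => h; constructor. Qed.

Lemma eventually_stuck_or_fair n (b : nat -> 'I_n -> bool) :
  exists (T : nat) (J : 'I_n -> bool),
    (forall k, J k -> forall m, T <= m -> b m k = false) /\
    (forall k, ~~ J k -> forall N, exists m, N <= m /\ b m k).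
Proof.
pose J k := decide (exists N, forall m, N <= m -> b m k = false).
have /fin_all_exists [N stuckN] : forall k, exists N, J k -> forall m, N <= m -> b m k = false.
  by move=> k; rewrite /J; case: decideP => [[N] stuck|_]; [exists N | exists 0].
exists (\max_k N k), J; split=> [k Jk m le_m|k].
  by apply: stuckN => //; apply: leq_trans le_m; apply: leq_bigmax.
rewrite /J; case: decideP => // not_stuck _ N0; apply: NNPP => no_move; apply: not_stuck.
by exists N0 => m le_m; apply/negbTE/negP => bmk; apply: no_move; exists m.
Qed.

Lemma first_departure n (r : nat -> 'I_n -> nat) (p : 'I_n -> nat) (J : 'I_n -> bool) l k :
  (forall k, r 0 k = p k) -> J k -> r l k != p k ->
  exists l1, (forall j, J j -> r l1 j = p j) /\ exists2 j, J j & r l1.+1 j != p j.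
Proof.
move=> r0 Jk rlk.
have ex : exists l, [exists j, J j && (r l j != p j)].
  by exists l; apply/existsP; exists k; rewrite Jk.
case: (ex_minnP ex) => [[|l1]]; first by case/existsP => j; rewrite r0 eqxx andbF.
move=> /existsP [j /andP [Jj rj]] min; exists l1; split; last by exists j.
move=> i Ji; apply/eqP/negPn/negP => ri.
have : l1.+1 <= l1 by apply: min; apply/existsP; exists i; rewrite Ji.
by rewrite ltnn.
Qed.

(* While [ri] stays at [ri 0], every position that [rj] passes through carries
   the label [fi (ri 0)]; this is what lets the lagging copy catch up. *)
Lemma lagging_agree (fi fj : nat -> bool) (ri rj : nat -> nat) di dj l :
  unit_step ri -> unit_step rj -> (forall l', fi (ri l') = fj (rj l')) ->
  di <= (ri 0).+1 -> rj 0 <= dj ->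
  fi di = fj dj -> ri l < di -> dj <= rj l -> fi di = fj (rj l).
Proof.
move=> si sj agree di_le dj_ge fd ril djl.
have ri_l : ri l = ri 0 by have := unit_step_homo si (leq0n l); lia.
have frozen v : rj 0 <= v <= rj l -> fj v = fi (ri 0).
  move=> hv; have [l' /andP [_ l'l] <-] := unit_step_ivt sj (leq0n l) hv.
  have := unit_step_homo si l'l; have := unit_step_homo si (leq0n l').
  by rewrite -agree ri_l => ? ?; have -> : ri l' = ri 0 by lia.
by have := unit_step_homo sj (leq0n l); rewrite fd !frozen //; lia.
Qed.

Definition kstep (K : kripke) (x y : KSt K) : KSt K :=
  if @krel K x y then y else odflt x [pick z | @krel K x z].

Lemma kstep_rel (K : kripke) (x y : KSt K) : serial K -> @krel K x (kstep x y).
Proof.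
move=> ser; rewrite /kstep; case: ifP => // _.
by case: pickP => [//|none]; have [z xz] := ser x; move: (none z); rewrite xz.
Qed.

Definition kstep_path (K : kripke) (x : KSt K) (i : nat) : KSt K :=
  iter i (fun y => kstep y y) x.

Section Greedy.
Variables (K : kripke) (n : nat) (E : 'I_n -> 'I_n -> KAP K -> Prop).
Implicit Types (cur nxt : 'I_n -> KSt K) (S : 'I_n -> bool).

Definition respects_at (c : 'I_n -> KSt K) :=
  forall i j a, E i j a -> klab (c i) a = klab (c j) a.

Definition safe_step cur nxt S := respects_at (fun k => if S k then nxt k else cur k).

Definition can_move cur nxt k := exists2 S, safe_step cur nxt S & S k.

Lemma safe_stepU cur nxt S1 S2 : respects_at cur ->
  safe_step cur nxt S1 -> safe_step cur nxt S2 -> safe_step cur nxt (fun k => S1 k || S2 k).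
Proof.
move=> ok ok1 ok2 i j a e /=; move: (ok i j a e) (ok1 i j a e) (ok2 i j a e) => /=.
by case: (S1 i); case: (S1 j); case: (S2 i); case: (S2 j) => /= h0 h1 h2; congruence.
Qed.

Lemma safe_step_can_move cur nxt (B : 'I_n -> bool) : respects_at cur ->
  (forall k, B k <-> can_move cur nxt k) -> safe_step cur nxt B.
Proof.
move=> ok B_can i j a e.
have witness k : exists2 S, safe_step cur nxt S & B k -> S k.
  have [/B_can [S okS Sk]|_] := boolP (B k); first by exists S.
  by exists (fun=> false).
have [Si oki Bi] := witness i; have [Sj okj Bj] := witness j.
have okU := safe_stepU ok oki okj.
have BU k : k \in [:: i; j] -> B k = Si k || Sj k.
  move=> kij; apply/idP/idP => [Bk|Uk]; last by apply/B_can; exists (fun k => Si k || Sj k).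
  by move: kij Bk; rewrite !inE => /orP [] /eqP -> => [/Bi|/Bj] ->; rewrite ?orbT.
by have := okU i j a e; rewrite /= !BU ?inE ?eqxx ?orbT.
Qed.

Definition alignment (t : 'I_n -> nat -> KSt K) (c : 'I_n -> nat) (r : nat -> 'I_n -> nat) :=
  [/\ forall k, r 0 k = c k, forall k, unit_step (r^~ k), forall k, unbounded (r^~ k) &
      forall l, respects_at (fun k => t k (r l k))].

Lemma alignment_max t c r (d : 'I_n -> nat) :
  alignment t c r -> (forall k, c k <= d k <= (c k).+1) -> respects_at (fun k => t k (d k)) ->
  alignment t d (fun l k => maxn (r l k) (d k)).
Proof.
move=> [r0 st unb ok] cd okd; split=> [k|k l|k N|l i j a e /=].
- by rewrite r0; apply/maxn_idPr; case/andP: (cd k).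
- by have := st k l; rewrite /=; lia.
- by have [l hl] := unb k N; exists l; lia.
have agree l' : klab (t i (r l' i)) a = klab (t j (r l' j)) a by exact: ok.
have := cd i; have := cd j; rewrite -!r0 => /andP [dj_ge dj_le] /andP [di_ge di_le].
case: (ltnP (r l i) (d i)) => li; case: (ltnP (r l j) (d j)) => lj.
- exact: okd.
- exact: (lagging_agree (fi := fun x => klab (t i x) a) (fj := fun x => klab (t j x) a)
            (st i) (st j) agree di_le dj_ge (okd i j a e) li lj).
- symmetry; apply: (lagging_agree (fi := fun x => klab (t j x) a)
                     (fj := fun x => klab (t i x) a) (st j) (st i) _ dj_le di_ge _ lj li).
    by move=> l'; exact: esym (agree l').
  exact: esym (okd i j a e).
- exact: agree.
Qed.

Variables (cur nxt : nat -> 'I_n -> KSt K) (b : nat -> 'I_n -> bool).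
Hypotheses (cur0 : forall k, cur 0 k = k_init K)
           (cur_nxt : forall m k, @krel K (cur m k) (nxt m k))
           (curS : forall m k, cur m.+1 k = if b m k then nxt m k else cur m k)
           (b_can_move : forall m k, b m k <-> can_move (cur m) (nxt m) k).

Lemma greedy_respects m : respects_at (cur m).
Proof.
elim: m => [|m IH] i j a e; first by rewrite !cur0.
by rewrite !curS; apply: (safe_step_can_move IH (b_can_move m)).
Qed.

Lemma cur_progress_eq k m1 m2 : progress b k m1 = progress b k m2 -> cur m1 k = cur m2 k.
Proof.
wlog le12 : m1 m2 / m1 <= m2 => [hw|].
  by case/orP: (leq_total m1 m2) => [/hw //|/hw h /esym /h /esym].
rewrite -(subnKC le12); elim: (m2 - m1) => [|d IH]; first by rewrite addn0.
rewrite addnS progressS curS => e.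
have := unit_step_homo (progress_unit_step b k) (leq_addr d m1).
by case: (b (m1 + d) k) e => /= e; [lia | move=> _; apply: IH; lia].
Qed.

Definition reach_time k x : nat :=
  match excluded_middle_informative (exists m, progress b k m == x) with
  | left reached => xchoose reached
  | right _ => 0
  end.

Definition destutter k x : KSt K := cur (reach_time k x) k.

Lemma destutter_progress k m : destutter k (progress b k m) = cur m k.
Proof.
rewrite /destutter /reach_time; case: excluded_middle_informative => [ex|[]]; last by exists m.
by apply: cur_progress_eq; apply/eqP; exact: xchooseP ex.
Qed.

Lemma destutter_rel k m x : x < progress b k m -> @krel K (destutter k x) (destutter k x.+1).
Proof.
move=> lt_x.
have ex : exists m, progress b k m == x.+1.
  have step := progress_unit_step b k.
  by have [m1 _ /eqP] := unit_step_ivt step (leq0n m) (v := x.+1) ltac:(by rewrite lt_x); exists m1.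
case: (ex_minnP ex) => [[|m'] /eqP px1 min]; first by [].
have bm : b m' k.
  apply: contraT => /negbTE bm.
  by have := min m'; rewrite ltnn -px1 progressS bm addn0 eqxx => /(_ isT).
have px : progress b k m' = x by move: px1; rewrite progressS bm; lia.
by rewrite -px1 -px !destutter_progress curS bm; exact: cur_nxt.
Qed.

Definition agrees_upto (t : 'I_n -> nat -> KSt K) m :=
  forall m' k, m' <= m -> t k (progress b k m') = cur m' k.

Hypothesis align0 : forall t, (forall i, kpath (t i)) -> exists r, alignment t (fun=> 0) r.

Lemma greedy_alignment m t : (forall i, kpath (t i)) -> agrees_upto t m ->
  exists r, alignment t (fun k => progress b k m) r.
Proof.
move=> t_path; elim: m => [|m IH] agr; first exact: align0.
have [r al] := IH (fun m' k le => agr m' k (leqW le)).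
exists (fun l k => maxn (r l k) (progress b k m.+1)); apply: alignment_max al _ _.
  by move=> k; apply: progress_unit_step.
by move=> i j a e; rewrite /= !agr //; exact: greedy_respects.
Qed.

Hypothesis ser : serial K.

Section Stuck.
Variables (T : nat) (J : 'I_n -> bool).
Hypotheses (J_stuck : forall k, J k -> forall m, T <= m -> b m k = false)
           (J_moves : forall k, ~~ J k -> forall N, exists m, N <= m /\ b m k).

Let p k := progress b k T.

Lemma stuck_progress k m : J k -> T <= m -> progress b k m = p k.
Proof.
move=> Jk; elim: m => [|m IH]; first by rewrite leqn0 => /eqP <-.
rewrite leq_eqVlt => /orP [/eqP <- //|Tm].
by rewrite progressS J_stuck // addn0 IH.
Qed.

Lemma stuck_cur k m : J k -> T <= m -> cur m k = cur T k.
Proof. by move=> Jk Tm; apply: cur_progress_eq; rewrite stuck_progress. Qed.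

Lemma moving_reach k x : ~~ J k -> p k <= x -> exists2 m, T <= m & progress b k m = x.
Proof.
move=> Jk px; have [m2 xm2] := progress_unbounded (J_moves Jk) x.
have step := progress_unit_step b k.
have [m /andP [Tm _] <-] := unit_step_ivt step (leq_maxl T m2) (v := x)
  ltac:(by rewrite px /=; apply: leq_trans xm2 (unit_step_homo step (leq_maxr _ _))).
by exists m.
Qed.

(* Copies stuck from time [T] are continued by the move the scheduler refused
   them, the others follow their own destuttered run. *)
Definition witness_path k x : KSt K :=
  if J k && (p k < x) then kstep_path (nxt T k) (x - (p k).+1) else destutter k x.

Lemma witness_path_le k x : x <= p k -> witness_path k x = destutter k x.
Proof. by move=> xp; rewrite /witness_path ltnNge xp andbF. Qed.

Lemma witness_path_p k : witness_path k (p k) = cur T k.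
Proof. by rewrite witness_path_le // destutter_progress. Qed.

Lemma witness_path_next k : J k -> witness_path k (p k).+1 = nxt T k.
Proof. by move=> Jk; rewrite /witness_path Jk ltnSn subnn. Qed.

Lemma witness_path_free k x :
  ~~ J k -> p k <= x -> exists2 m, T <= m & witness_path k x = cur m k.
Proof.
move=> Jk px; have [m Tm <-] := moving_reach Jk px.
by exists m; rewrite // /witness_path (negbTE Jk) destutter_progress.
Qed.

Lemma witness_path_kpath k : kpath (witness_path k).
Proof.
split; first by rewrite witness_path_le // (destutter_progress k 0).
move=> x; case: (boolP (J k)) => Jk; last first.
  have [m xm] := progress_unbounded (J_moves Jk) x.+1.
  by rewrite /witness_path (negbTE Jk) /=; exact: destutter_rel xm.
case: (ltngtP x (p k)) => [xp|px|->]; last by rewrite witness_path_p witness_path_next.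
  by rewrite !witness_path_le ?(ltnW xp) //; exact: (destutter_rel (m := T) xp).
by rewrite /witness_path Jk px ltnW //= subSn //; exact: kstep_rel.
Qed.

Lemma witness_agrees : agrees_upto witness_path T.
Proof.
move=> m k mT; rewrite witness_path_le ?destutter_progress //.
exact: (unit_step_homo (progress_unit_step b k) mT).
Qed.

Lemma respects_patch (X Y : 'I_n -> KSt K) :
  respects_at Y -> (forall k, J k -> X k = Y k) ->
  (forall k, ~~ J k -> X k = cur T k /\ exists2 m, T <= m & Y k = cur m k) ->
  respects_at X.
Proof.
move=> okY XY Ycur.
have mixed i j a : J i -> ~~ J j -> klab (Y i) a = klab (Y j) a ->
    (forall m, klab (cur m i) a = klab (cur m j) a) -> klab (X i) a = klab (X j) a.
  move=> Ji Jj eY ecur; have [-> [m Tm Ym]] := Ycur j Jj.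
  by rewrite XY // eY Ym -!ecur stuck_cur.
move=> i j a e; have ecur m := greedy_respects m e.
case: (boolP (J i)) => Ji; case: (boolP (J j)) => Jj.
- by rewrite !XY //; exact: okY.
- exact: mixed (okY _ _ _ e) ecur.
- by symmetry; apply: mixed => //; exact: esym (okY _ _ _ e).
- by have [-> _] := Ycur i Ji; have [-> _] := Ycur j Jj; exact: ecur.
Qed.

(* Aligning the witness paths from the current positions, the first copy of
   [J] to leave its position yields a safe step that the greedy scheduler
   would have taken at time [T]. *)
Lemma no_stuck_copy k0 : ~~ J k0.
Proof.
apply/negP => Jk0.
have [r [r0 r_st r_unb r_ok]] := greedy_alignment witness_path_kpath witness_agrees.
have r_ge l k : p k <= r l k by rewrite /p -r0; exact: (unit_step_homo (r_st k) (leq0n l)).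
have [l r_l] := r_unb k0 (p k0).+1.
have [l1 [at_p [j0 Jj0 moved]]] := first_departure r0 Jk0 (l := l) (negbT (gtn_eqF r_l)).
pose S k := J k && (r l1.+1 k != p k).
suff : can_move (cur T) (nxt T) j0 by move/b_can_move; rewrite J_stuck.
exists S; last by rewrite /S Jj0.
apply: respects_patch (r_ok l1.+1) _ _ => k Jk; last first.
  by rewrite /S (negbTE Jk); split=> //; exact: witness_path_free.
have := r_st k l1; rewrite /= at_p // => /andP [pr rp].
rewrite /S Jk /=; case: eqP => [->|ne]; first by rewrite witness_path_p.
have -> : r l1.+1 k = (p k).+1 by rewrite /p in ne *; lia.
by rewrite witness_path_next.
Qed.

End Stuck.

Lemma greedy_fair : fair_traj b.
Proof.
have [T [J [J_stuck J_moves]]] := eventually_stuck_or_fair b.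
by move=> k; exact: (J_moves _ (no_stuck_copy J_stuck J_moves k)).
Qed.

End Greedy.

Section GreedyStrategy.
Variables (K : kripke) (n : nat) (E : 'I_n -> 'I_n -> KAP K -> Prop).
Local Notation G := (stut (kripke_game K)).

Definition last_states (h : seq ('I_n -> St G)) (k : 'I_n) : KSt K :=
  (last (fun=> (k_init K, false)) h k).1.

Definition greedy_bit (h : seq ('I_n -> St G)) (proposed : 'I_n -> KSt K) (j : 'I_n) : bool :=
  decide (can_move E (last_states h) (fun k => kstep (last_states h k) (proposed k)) j).

(* The state component of the scheduler's move is ignored by [delta]; the bit
   only reads the Kripke agents' moves, which have a lower stage. *)
Definition greedy_strategy : 'I_n -> Ag G -> strat_fun G n :=
  fun j xi h mv =>
    if xi is None then (k_init K, ~~ greedy_bit h (fun k => (mv k (Some tt)).1) j)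
    else (k_init K, false).

Lemma greedy_strategy_stage j xi : stage_respecting xi (greedy_strategy j xi).
Proof.
case: xi => [[]|] h mv mv' mv_mv' //=.
have -> // : (fun k => (mv k (Some tt)).1) = (fun k => (mv' k (Some tt)).1).
by apply: functional_extensionality => k; rewrite mv_mv'.
Qed.

Variables (u : nat -> 'I_n -> St G) (mv : nat -> 'I_n -> Ag G -> Mv G).
Hypotheses (u0 : forall j, u 0 j = s_init G)
           (u_step : forall m j, u m.+1 j = delta (u m j) (mv m j))
           (mv_sched : forall m j, mv m j None = greedy_strategy j None (history u m) (mv m)).

Definition out_cur m k : KSt K := (u m k).1.
Definition out_nxt m k : KSt K := kstep (out_cur m k) (mv m k (Some tt)).1.
Definition out_moves m k : bool := decide (can_move E (out_cur m) (out_nxt m) k).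

Lemma last_history m : last_states (history u m) = out_cur m.
Proof. by rewrite /last_states /history -(addn1 m) iotaD map_cat /= last_cat. Qed.

Lemma out_step m k :
  u m.+1 k = if out_moves m k then (out_nxt m k, false) else (out_cur m k, true).
Proof.
rewrite u_step /= mv_sched /= /greedy_bit last_history.
by rewrite /out_moves /out_nxt /out_cur; case: decide.
Qed.

Lemma out_cur0 k : out_cur 0 k = k_init K.
Proof. by rewrite /out_cur u0. Qed.

Lemma out_curS m k : out_cur m.+1 k = if out_moves m k then out_nxt m k else out_cur m k.
Proof. by rewrite /out_cur out_step; case: out_moves. Qed.

Lemma out_moves_can m k : out_moves m k <-> can_move E (out_cur m) (out_nxt m) k.
Proof. by rewrite /out_moves; split=> /decideP. Qed.

Lemma out_respects m : respects_at E (out_cur m).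
Proof. exact: (greedy_respects out_cur0 out_curS out_moves_can m). Qed.

Hypotheses (ser : serial K)
  (align0 : forall t, (forall i, kpath (t i)) -> exists r, alignment E t (fun=> 0) r).

Lemma out_nxt_rel m k : @krel K (out_cur m k) (out_nxt m k).
Proof. exact: kstep_rel. Qed.

Lemma out_fair : fair_traj out_moves.
Proof.
exact: (greedy_fair out_cur0 out_nxt_rel out_curS out_moves_can align0 ser).
Qed.

Lemma out_destutter_kpath k : kpath (destutter out_cur out_moves k).
Proof.
split=> [|x]; first by rewrite (destutter_progress out_curS k 0) out_cur0.
have [m xm] := progress_unbounded (out_fair k) x.+1.
exact: (destutter_rel out_nxt_rel out_curS xm).
Qed.

End GreedyStrategy.

Lemma ahltl_alignment (K : kripke) n (phi : hform (KAP K) n) E P :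
  ahltl_sat phi -> (forall w, hsat w 0 phi <-> respects E w /\ P w) ->
  forall t, (forall i, kpath (t i)) -> exists r, alignment E t (fun=> 0) r.
Proof.
move=> sat phi_eq t t_path; have [tau [tau_fair /phi_eq [resp _]]] := sat t t_path.
exists (fun l k => progress tau k l); split=> // k.
- exact: progress_unit_step.
- exact: progress_unbounded (tau_fair k).
- by move=> i j a e; exact: resp.
Qed.

Lemma hyperatl_stut_of_ahltl (K : kripke) (n : nat) (phi : hform (KAP K) n) :
  serial K -> admissible phi -> ahltl_sat phi ->
  hyperatl_block (G := stut (kripke_game K)) (fun _ xi => xi == None)
      (HAnd (hmap Some phi) (fairf (KAP K) n)).
Proof.
move=> ser adm sat; have [E [P [P_closed phi_eq]]] := admissible_decomp adm.
exists (greedy_strategy E); split=> [|u [u0 /ClassicalEpsilon.choice [mv mvP]]].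
  exact: greedy_strategy_stage.
have u_step m j := (mvP m).1 j; have mv_sched m j := (mvP m).2 j None isT.
have align0 := ahltl_alignment sat phi_eq.
have fair := out_fair u0 u_step mv_sched ser align0.
have t_path := out_destutter_kpath u0 u_step mv_sched ser align0.
have [tau [tau_fair /phi_eq [_ P_tau]]] := sat _ t_path.
split.
- apply/hsat_hmap/phi_eq; split=> [i j a m e|].
    exact: (out_respects u0 u_step mv_sched m e).
  apply: P_closed P_tau => i; pose dst := destutter (out_cur u) (out_moves E u mv).
  apply: (stutter_equiv_reparam (w := fun x => klab (dst i x))
            (progress_unit_step _ i) _ (progress_unbounded (tau_fair i))
            (progress_unit_step _ i) _ (progress_unbounded (fair i))) => // y a.
  by rewrite /= /dst (destutter_progress (out_curS u_step mv_sched)).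
- apply/hsat_fairf => i N; have [m [Nm bm]] := fair i N.
  by exists m.+1; split; [lia | rewrite /= (out_step u_step mv_sched) bm].
Qed.

Theorem theorem7p1 (K : kripke) (n : nat) (phi : hform (KAP K) n) :
  serial K ->
  (hyperatl_block (G := stut (kripke_game K)) (fun _ xi => xi == None)
      (HAnd (hmap Some phi) (fairf (KAP K) n)) -> ahltl_sat phi) /\
  (admissible phi ->
     (hyperatl_block (G := stut (kripke_game K)) (fun _ xi => xi == None)
        (HAnd (hmap Some phi) (fairf (KAP K) n)) <-> ahltl_sat phi)).
Proof.
move=> ser; split=> [|adm]; first exact: ahltl_of_hyperatl_stut.
by split; [exact: ahltl_of_hyperatl_stut | exact: hyperatl_stut_of_ahltl].
Qed.
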